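(* Let solutions $\psi_n$ of the KG equation concentrate at the trajectory $\hat{\mathbf r}$. Then the adjacent ergocenters $\mathbf r_n(t)$ of the solutions converge to $\hat{\mathbf r}(t)$ uniformly on $[T_-,T_+]$.
   Context: Fix constants $c>0$, $m>0$ and a real charge $q$. For parameters $\chi>0$, $a>0$ and a real electric potential $\varphi(t,\mathbf x)$, the KG equation is $-c^{-2}\tilde\partial_t^2\psi+\Delta\psi-G_a'(|\psi|^2)\psi-\kappa_0^2\psi=0$, $\tilde\partial_t=\partial_t+\mathrm i q\varphi/\chi$, $\kappa_0=mc/\chi$, with $G_a(s)=a^{-5}G_1(a^3s)$, where $G_1(0)=0$, $G_1'\in C^1((0,\infty))$, $\psi\mapsto G_1'(|\psi|^2)\psi$ extends to a $C^\alpha(\mathbb C)$ function and $\psi\mapsto G_1(|\psi|^2)$ is $C^{1+\alpha}(\mathbb C)$ for every $\alpha\in(0,1)$, with $|G_1(|\psi|^2)|\le C|\psi|^{1+\alpha}$, $|G_1'(|\psi|^2)||\psi|\le C|\psi|^\alpha$ for bounded $|\psi|$. $a_C=\chi/(mc)$. Energy density $\mathcal E=\frac{\chi^2}{2m}[c^{-2}|\tilde\partial_t\psi|^2+|\nabla\psi|^2+G_a(|\psi|^2)+\kappa_0^2|\psi|^2]$. $\nabla_{0,\mathbf x}=(c^{-1}\partial_t,\partial_1,\partial_2,\partial_3)$. Trajectory: $\hat{\mathbf r}\in C^2([T_-,T_+];\mathbb R^3)$ with $|\partial_t\hat{\mathbf r}|,|\partial_t^2\hat{\mathbf r}|\le C$;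 $R_n\to0$; $\Omega_n(t)=\{|\mathbf x-\hat{\mathbf r}(t)|\le R_n\}$, $\hat\Omega_n=\{(t,\mathbf x):t\in[T_-,T_+],\mathbf x\in\Omega_n(t)\}$. Localized KG equations: $a_n\to0$, $\chi_n\to0$, $a_{C,n}/a_n\le C$, $R_n/a_n\to\infty$; $\varphi_n\in C^2(\hat\Omega_n)$ with $\sup_{\hat\Omega_n}(|\varphi_n|+|\nabla_{0,\mathbf x}\varphi_n|)\le C$; a limit $\varphi_\infty(t,\mathbf x)=\varphi_\infty(t,\hat{\mathbf r}(t))+(\mathbf x-\hat{\mathbf r}(t))\cdot\nabla\varphi_\infty(t)$ with $\sup_{\hat\Omega_n}(|\varphi_n-\varphi_\infty|+|\nabla_{0,\mathbf x}(\varphi_n-\varphi_\infty)|)\to0$ and $|\varphi_\infty(t,\hat{\mathbf r}(t))|,|\nabla\varphi_\infty(t)|,|\partial_t\nabla\varphi_\infty(t)|\le C$. Concentrating solutions: $\psi_n\in C^2(\hat\Omega_n)$ solving KG with $(\chi_n,a_n,\varphi_n)$ in $\hat\Omega_n$ such that (i) $\max_t\int_{\Omega_n(t)}[a_C^2|\nabla_{0,\mathbf x}\psi_n|^2+a_C^2|G_a(|\psi_n|^2)|+|\psi_n|^2]d^3x\le C$; (ii) $\max_t\int_{\partial\Omega_n(t)}[\text{same integrand}]d^2\sigma\to0$; (iii) $\bar{\mathcal E}_n(t)=\int_{\Omega_n(t)}\mathcal E_nd^3x\ge c_0>0$ for $n\ge n_0$; (iv) $\bar{\mathcal E}_n(t_0)$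 converges for some $t_0$. Adjacent ergocenter: $\mathbf r_n(t)=\bar{\mathcal E}_n(t)^{-1}\int_{\Omega_n(t)}\mathbf x\,\mathcal E_n\,d^3x$. *)

From mathcomp Require Import all_boot all_algebra.
From mathcomp Require Import all_classical all_reals all_analysis.
From mathcomp Require Export complex.
Import GRing.Theory Num.Theory numFieldTopology.Exports numFieldNormedType.Exports.

Set Implicit Arguments.
Unset Strict Implicit.
Unset Printing Implicit Defensive.

Local Open Scope ring_scope.
Local Open Scope complex_scope.
Local Open Scope classical_set_scope.

Notation R3 R := (R * R * R)%type.

Definition x1 {R : realType} (x : R3 R) : R := x.1.1.
Definition x2 {R : realType} (x : R3 R) : R := x.1.2.
Definition x3 {R : realType} (x : R3 R) : R := x.2.

Definition coord3 {R : realType} (i : nat) (x : R3 R) : R :=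
  match i with 0%N => x1 x | 1%N => x2 x | _ => x3 x end.

Definition upd3 {R : realType} (i : nat) (x : R3 R) (s : R) : R3 R :=
  match i with
  | 0%N => (s, x2 x, x3 x)
  | 1%N => (x1 x, s, x3 x)
  | _ => (x1 x, x2 x, s)
  end.

Definition sub3 {R : realType} (x y : R3 R) : R3 R :=
  (x1 x - x1 y, x2 x - x2 y, x3 x - x3 y).

Definition dot3 {R : realType} (x y : R3 R) : R :=
  x1 x * x1 y + x2 x * x2 y + x3 x * x3 y.

Definition norm3 {R : realType} (x : R3 R) : R := Num.sqrt (dot3 x x).

Definition cball3 {R : realType} (c : R3 R) (r : R) : set (R3 R) :=
  [set x | norm3 (sub3 x c) <= r].

Definition leb3 (R : realType) :=
  ((@lebesgue_measure R) \x (@lebesgue_measure R) \x (@lebesgue_measure R))%E.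

Definition vint3 {R : realType} (A : set (R3 R)) (f : R3 R -> R) : R :=
  Rintegral (@leb3 R) A f.

Definition sph3 {R : realType} (c : R3 R) (r th ph : R) : R3 R :=
  (x1 c + r * sin th * cos ph, x2 c + r * sin th * sin ph, x3 c + r * cos th).

(* surface integral over the sphere |x - c| = r (surface measure d^2 sigma),
   via the spherical parametrisation: d^2 sigma = r^2 sin th dth dph *)
Definition sint3 {R : realType} (c : R3 R) (r : R) (g : R3 R -> R) : R :=
  Rintegral ((@lebesgue_measure R) \x (@lebesgue_measure R))%E
    (`[0, pi] `*` `[0, 2 * pi])
    (fun p => g (sph3 c r p.1 p.2) * r ^+ 2 * sin p.1).

Definition cnorm2 {R : realType} (z : R[i]) : R :=
  complex.Re z ^+ 2 + complex.Im z ^+ 2.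
Definition cabs {R : realType} (z : R[i]) : R := Num.sqrt (cnorm2 z).

(* real-valued fields f(t,x); k = 0 is time, k = 1,2,3 the space variables *)
Definition pdf {R : realType} (k : nat) (f : R -> R3 R -> R) (t : R) (x : R3 R) : R :=
  match k with
  | 0%N => derive1 (fun s => f s x) t
  | S i => derive1 (fun s => f t (upd3 i x s)) (coord3 i x)
  end.

Definition pdable {R : realType} (k : nat) (f : R -> R3 R -> R) (t : R) (x : R3 R) : Prop :=
  match k with
  | 0%N => derivable (fun s => f s x) t 1
  | S i => derivable (fun s => f t (upd3 i x s)) (coord3 i x) 1
  end.

Definition C1_on {R : realType} (S : set (R * R3 R)) (f : R -> R3 R -> R) : Prop :=
  {within S, continuous (fun p => f p.1 p.2)} /\
  forall k, (k < 4)%N ->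
    (forall p, S p -> pdable k f p.1 p.2) /\
    {within S, continuous (fun p => pdf k f p.1 p.2)}.

Definition C2_on {R : realType} (S : set (R * R3 R)) (f : R -> R3 R -> R) : Prop :=
  C1_on S f /\ forall k, (k < 4)%N -> C1_on S (pdf k f).

Definition reF {R : realType} (psi : R -> R3 R -> R[i]) : R -> R3 R -> R :=
  fun t x => complex.Re (psi t x).
Definition imF {R : realType} (psi : R -> R3 R -> R[i]) : R -> R3 R -> R :=
  fun t x => complex.Im (psi t x).

Definition cpd {R : realType} (k : nat) (psi : R -> R3 R -> R[i]) : R -> R3 R -> R[i] :=
  fun t x => (pdf k (reF psi) t x) +i* (pdf k (imF psi) t x).

Definition cC2_on {R : realType} (S : set (R * R3 R)) (psi : R -> R3 R -> R[i]) : Prop :=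
  C2_on S (reF psi) /\ C2_on S (imF psi).

Definition grad_sq {R : realType} (psi : R -> R3 R -> R[i]) (t : R) (x : R3 R) : R :=
  cnorm2 (cpd 1 psi t x) + cnorm2 (cpd 2 psi t x) + cnorm2 (cpd 3 psi t x).

Definition grad0_sq {R : realType} (c : R) (psi : R -> R3 R -> R[i]) (t : R) (x : R3 R) : R :=
  c ^-2 * cnorm2 (cpd 0 psi t x) + grad_sq psi t x.

Definition grad0_norm {R : realType} (c : R) (f : R -> R3 R -> R) (t : R) (x : R3 R) : R :=
  Num.sqrt (c ^-2 * pdf 0 f t x ^+ 2 + pdf 1 f t x ^+ 2 + pdf 2 f t x ^+ 2
            + pdf 3 f t x ^+ 2).

Definition lapl {R : realType} (psi : R -> R3 R -> R[i]) : R -> R3 R -> R[i] :=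
  fun t x => cpd 1 (cpd 1 psi) t x + cpd 2 (cpd 2 psi) t x + cpd 3 (cpd 3 psi) t x.

Definition covdt {R : realType} (q chi : R) (phi : R -> R3 R -> R)
  (psi : R -> R3 R -> R[i]) : R -> R3 R -> R[i] :=
  fun t x => cpd 0 psi t x + 'i * ((q * phi t x / chi)%:C) * psi t x.

Definition Ga {R : realType} (G1 : R -> R) (a s : R) : R := a ^-5 * G1 (a ^+ 3 * s).

(* G_a'(|psi|^2) psi, with G_a'(s) = a^-2 G_1'(a^3 s); at psi = 0 it is given
   its continuous extension, which is 0 *)
Definition NLa {R : realType} (dG1 : R -> R) (a : R) (z : R[i]) : R[i] :=
  if z == 0 then 0 else ((a ^-2 * dG1 (a ^+ 3 * cnorm2 z))%:C) * z.

Definition NL1 {R : realType} (dG1 : R -> R) (z : R[i]) : R[i] :=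
  (dG1 (cnorm2 z))%:C * z.

Definition loc_holder_c {R : realType} (al : R) (F : R[i] -> R[i]) : Prop :=
  forall M : R, 0 < M -> exists K : R, forall z w : R[i],
    cabs z <= M -> cabs w <= M -> cabs (F z - F w) <= K * powR (cabs (z - w)) al.

Definition loc_holder_r {R : realType} (al : R) (F : R[i] -> R) : Prop :=
  forall M : R, 0 < M -> exists K : R, forall z w : R[i],
    cabs z <= M -> cabs w <= M -> `|F z - F w| <= K * powR (cabs (z - w)) al.

Definition dRe {R : realType} (H : R[i] -> R) (z : R[i]) : R :=
  derive1 (fun s => H (s +i* complex.Im z)) (complex.Re z).
Definition dIm {R : realType} (H : R[i] -> R) (z : R[i]) : R :=
  derive1 (fun s => H (complex.Re z +i* s)) (complex.Im z).

Definition C1alpha_c {R : realType} (al : R) (H : R[i] -> R) : Prop :=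
  (forall z : R[i], derivable (fun s => H (s +i* complex.Im z)) (complex.Re z) 1 /\
                    derivable (fun s => H (complex.Re z +i* s)) (complex.Im z) 1) /\
  loc_holder_r al (dRe H) /\ loc_holder_r al (dIm H).

Definition G1_hyp {R : realType} (G1 dG1 : R -> R) : Prop :=
  G1 0 = 0 /\
  (forall s : R, 0 < s -> is_derive s 1 G1 (dG1 s)) /\
  (forall s : R, 0 < s -> derivable dG1 s 1 /\ {for s, continuous (derive1 dG1)}) /\
  (forall al : R, 0 < al < 1 ->
     (exists F : R[i] -> R[i], loc_holder_c al F /\
        forall z : R[i], z != 0 -> F z = NL1 dG1 z) /\
     C1alpha_c al (fun z => G1 (cnorm2 z)) /\
     (forall M : R, 0 < M -> exists C : R, forall z : R[i], cabs z <= M ->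
        `|G1 (cnorm2 z)| <= C * powR (cabs z) (1 + al) /\
        (z != 0 -> `|dG1 (cnorm2 z)| * cabs z <= C * powR (cabs z) al))).

Definition KG_op {R : realType} (c m q : R) (dG1 : R -> R) (chi a : R)
  (phi : R -> R3 R -> R) (psi : R -> R3 R -> R[i]) (t : R) (x : R3 R) : R[i] :=
  let kappa0 := m * c / chi in
  - ((c ^-2)%:C) * covdt q chi phi (covdt q chi phi psi) t x
  + lapl psi t x - NLa dG1 a (psi t x) - ((kappa0 ^+ 2)%:C) * psi t x.

Definition edens {R : realType} (c m q : R) (G1 : R -> R) (chi a : R)
  (phi : R -> R3 R -> R) (psi : R -> R3 R -> R[i]) (t : R) (x : R3 R) : R :=
  let kappa0 := m * c / chi in
  chi ^+ 2 / (2 * m) *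
  (c ^-2 * cnorm2 (covdt q chi phi psi t x) + grad_sq psi t x
   + Ga G1 a (cnorm2 (psi t x)) + kappa0 ^+ 2 * cnorm2 (psi t x)).

Definition conc_dens {R : realType} (c m : R) (G1 : R -> R) (chi a : R)
  (psi : R -> R3 R -> R[i]) (t : R) (x : R3 R) : R :=
  let aC := chi / (m * c) in
  aC ^+ 2 * grad0_sq c psi t x + aC ^+ 2 * `|Ga G1 a (cnorm2 (psi t x))|
  + cnorm2 (psi t x).

Definition vder {R : realType} (r : R -> R3 R) (t : R) : R3 R :=
  (derive1 (fun s => x1 (r s)) t, derive1 (fun s => x2 (r s)) t,
   derive1 (fun s => x3 (r s)) t).

Definition vderivable {R : realType} (r : R -> R3 R) (t : R) : Prop :=
  derivable (fun s => x1 (r s)) t 1 /\ derivable (fun s => x2 (r s)) t 1 /\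
  derivable (fun s => x3 (r s)) t 1.

Definition vC2_on {R : realType} (a b : R) (r : R -> R3 R) : Prop :=
  (forall t, a <= t <= b -> vderivable r t /\ vderivable (vder r) t) /\
  {within `[a, b], continuous (vder (vder r))}.

Definition tube {R : realType} (Tm Tp : R) (rh : R -> R3 R) (Rn : R) : set (R * R3 R) :=
  [set p | Tm <= p.1 <= Tp /\ cball3 (rh p.1) Rn p.2].

Definition Ebar {R : realType} (c m q : R) (G1 : R -> R) (chi a : R)
  (phi : R -> R3 R -> R) (psi : R -> R3 R -> R[i]) (rh : R -> R3 R) (Rn t : R) : R :=
  vint3 (cball3 (rh t) Rn) (edens c m q G1 chi a phi psi t).

Definition ergocenter {R : realType} (c m q : R) (G1 : R -> R) (chi a : R)
  (phi : R -> R3 R -> R) (psi : R -> R3 R -> R[i]) (rh : R -> R3 R) (Rn t : R) : R3 R :=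
  let E := Ebar c m q G1 chi a phi psi rh Rn t in
  let e := edens c m q G1 chi a phi psi t in
  (E^-1 * vint3 (cball3 (rh t) Rn) (fun x => x1 x * e x),
   E^-1 * vint3 (cball3 (rh t) Rn) (fun x => x2 x * e x),
   E^-1 * vint3 (cball3 (rh t) Rn) (fun x => x3 x * e x)).

(* phi_infinity(t,x) = phi_inf(t, rh t) + (x - rh t) . grad phi_inf(t),
   parametrised by phi0(t) = phi_inf(t, rh t) and gphi(t) = grad phi_inf(t) *)
Definition phi_inf {R : realType} (rh : R -> R3 R) (phi0 : R -> R) (gphi : R -> R3 R)
  : R -> R3 R -> R :=
  fun t x => phi0 t + dot3 (sub3 x (rh t)) (gphi t).

(* The adjacent ergocenter r_n(t) is the mean of the points of the ball
   Omega_n(t) = B(rh(t), R_n) weighted by the energy density E_n, so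
   r_n(t) - rh(t) = Ebar_n(t)^-1 * int (x - rh(t)) E_n(t, x) dx.  The energy
   density, although it may change sign through G_a, is dominated pointwise by
   a constant multiple of the integrand of condition (i), the constant depending
   only on c, m, q and the bound on phi_n.  Hence (i) and the lower bound (iii)
   give |r_n(t) - rh(t)| <= const * R_n uniformly in t, and R_n -> 0.  Integrability over the
   ball comes from the continuity of psi_n, phi_n and their first derivatives
   on the compact tube and from the growth bound on G_1. *)

From mathcomp Require Import all_boot all_algebra.
From mathcomp Require Import all_classical all_reals all_analysis.
From mathcomp Require Import complex.
From mathcomp Require Import all_order ring lra.
Import GRing.Theory Num.Theory numFieldTopology.Exports numFieldNormedType.Exports.
Import Order.TTheory.
Local Open Scope ring_scope.
Local Open Scope classical_set_scope.

Section Geometry3.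
Context {R : realType}.
Implicit Types (x v c : R3 R) (r D : R).

Lemma coord_le_norm3 v :
  [/\ `|x1 v| <= norm3 v, `|x2 v| <= norm3 v & `|x3 v| <= norm3 v].
Proof.
rewrite /norm3 /dot3; split; rewrite -sqrtr_sqr; apply: ler_wsqrtr;
  set a := x1 v; set b := x2 v; set c := x3 v; nra.
Qed.

Lemma norm3_le v D :
  `|x1 v| <= D -> `|x2 v| <= D -> `|x3 v| <= D -> norm3 v <= 3 * D.
Proof.
move=> h1 h2 h3; have D0 : 0 <= D := le_trans (normr_ge0 _) h1.
rewrite -[3 * D]ger0_norm ?mulr_ge0 // -sqrtr_sqr; apply: ler_wsqrtr.
rewrite /dot3 -!expr2 -(real_normK (num_real (x1 v))).
rewrite -(real_normK (num_real (x2 v))) -(real_normK (num_real (x3 v))).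
have := normr_ge0 (x1 v); have := normr_ge0 (x2 v); have := normr_ge0 (x3 v).
nra.
Qed.

Lemma cball3_sub_box c r :
  cball3 c r `<=`
  (`[x1 c - r, x1 c + r] `*` `[x2 c - r, x2 c + r]) `*` `[x3 c - r, x3 c + r].
Proof.
move=> x hx; have [h1 h2 h3] := coord_le_norm3 (sub3 x c).
have near_itv (a b : R) : `|a - b| <= norm3 (sub3 x c) -> b - r <= a <= b + r.
  by move/le_trans/(_ hx); rewrite ler_norml => /andP[? ?]; apply/andP; split; lra.
by split; [split|]; rewrite /= in_itv /=; apply: near_itv.
Qed.

Lemma x1_continuous : continuous (@x1 R).
Proof. by move=> x; apply: continuous_comp; [exact: cvg_fst|exact: cvg_fst]. Qed.

Lemma x2_continuous : continuous (@x2 R).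
Proof. by move=> x; apply: continuous_comp; [exact: cvg_fst|exact: cvg_snd]. Qed.

Lemma x3_continuous : continuous (@x3 R).
Proof. by move=> x; exact: cvg_snd. Qed.

Lemma cball3_closed c r : closed (cball3 c r).
Proof.
apply: (@preimage_closed _ _ (fun x => norm3 (sub3 x c)) [set s | s <= r]);
  last exact: closed_le.
move=> x _; apply: (continuous_comp (f := fun x => dot3 (sub3 x c) (sub3 x c)));
  last exact: sqrt_continuous.
by apply: continuousD; [apply: continuousD|]; apply: continuousM; apply: continuousB;
  first [exact: x1_continuous|exact: x2_continuous|exact: x3_continuous
        |exact: cst_continuous].
Qed.

Lemma cball3_compact c r : compact (cball3 c r).
Proof.
apply: subclosed_compact (cball3_closed c r) _ (@cball3_sub_box c r).
by apply: compact_setX; [apply: compact_setX|]; exact: segment_compact.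
Qed.

End Geometry3.

Section Lebesgue3.
Context {R : realType}.

Definition rat_box (q : rat * rat * rat) (k : nat) : set (R3 R) :=
  (ball (ratr q.1.1 : R) k.+1%:R^-1 `*` ball (ratr q.1.2 : R) k.+1%:R^-1)
  `*` ball (ratr q.2 : R) k.+1%:R^-1.

Lemma rat_box_measurable q k : measurable (rat_box q k).
Proof.
by apply: measurableX; [apply: measurableX|]; exact: measurable_realfun.measurable_ball.
Qed.

Lemma exists_rat_near (x r : R) : 0 < r -> exists q : rat, `|ratr q - x| < r.
Proof.
move=> r0; have /rat_in_itvoo[q] : x - r < x + r by rewrite ltrD2l gtrN.
by rewrite in_itv /= => /andP[? ?]; exists q; rewrite ltr_norml; apply/andP; split; lra.
Qed.

(* Every open set is the countable union of the rational boxes it contains. *)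
Lemma open3_measurable (U : set (R3 R)) : open U -> measurable U.
Proof.
move=> oU.
have -> : U = \bigcup_(i : rat * rat * rat * nat)
    (if `[< rat_box i.1 i.2 `<=` U >] then rat_box i.1 i.2 else set0).
  apply/seteqP; split => [x Ux|x [i _]]; last by case: asboolP => // /[apply].
  have /nbhs_ballP[e e0 eU] := oU x Ux.
  set K : R := (Num.truncn (2 / e)).+1%:R; have K0 : 0 < K by rewrite ltr0n.
  have r0 : 0 < K^-1 by rewrite invr_gt0.
  have r2e : K^-1 + K^-1 < e.
    by rewrite -mulr2n -mulr_natl ltr_pdivrMr // mulrC -ltr_pdivrMr // truncnS_gt.
  have near_pt (p a b : R) : `|p - a| < K^-1 -> `|p - b| < K^-1 -> `|a - b| < e.
    by move=> pa pb; have := ler_distD p a b; rewrite (distrC a p); clearbody K; lra.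
  have [q1 h1] := exists_rat_near x.1.1 _ r0.
  have [q2 h2] := exists_rat_near x.1.2 _ r0.
  have [q3 h3] := exists_rat_near x.2 _ r0.
  exists ((q1, q2, q3), (Num.truncn (2 / e))) => //=.
  have boxU : rat_box (q1, q2, q3) (Num.truncn (2 / e)) `<=` U.
    move=> y [[/= y1 y2] y3]; apply: eU.
    by split; [split|]; rewrite /ball /=; apply: near_pt; eassumption.
  by rewrite asboolT //.
apply: countable_bigcupT_measurable; first exact: countableP.
by move=> i; case: asboolP => _; [exact: rat_box_measurable|].
Qed.

Lemma cball3_measurable (c : R3 R) r : measurable (cball3 c r).
Proof.
rewrite -[cball3 c r]setCK; apply: measurableC; apply: open3_measurable.
exact: closed_openC (cball3_closed c r).
Qed.

Lemma leb3_box_lty (a1 b1 a2 b2 a3 b3 : R) :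
  (leb3 ((`[a1, b1] `*` `[a2, b2]) `*` `[a3, b3]) < +oo)%E.
Proof.
rewrite /leb3 product_measure1E //; last by apply: measurableX.
set m12 := (X in (X * _)%E); set m3 := (X in (_ * X)%E).
have -> : m12 = (lebesgue_measure `[a1, b1] * lebesgue_measure `[a2, b2])%E.
  exact: product_measure1E.
have -> : m3 = lebesgue_measure `[a3, b3] by [].
rewrite !lebesgue_measure_itv /=.
by repeat case: ifP => _; rewrite -?EFinD -?EFinM ?ltry.
Qed.

Lemma cball3_lty (c : R3 R) r : (leb3 (cball3 c r) < +oo)%E.
Proof.
have mbox : measurable ((`[x1 c - r, x1 c + r] `*` `[x2 c - r, x2 c + r])
    `*` `[x3 c - r, x3 c + r] : set (R3 R)).
  by apply: measurableX; [apply: measurableX|].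
have := @le_measure _ _ _ (@leb3 R) _ _ (mem_set (cball3_measurable c r))
  (mem_set mbox) (@cball3_sub_box _ c r).
by move/le_lt_trans; apply; exact: leb3_box_lty.
Qed.

End Lebesgue3.

Section BoundedMeasurable.
Context {d : measure_display} {T : measurableType d} {R : realType}.
Implicit Types (B : set T) (f g : T -> R).

Definition bdd_measurable B f :=
  measurable_fun B f /\ exists M : R, forall x, B x -> `|f x| <= M.

Lemma bdd_measurable_cst B (k : R) : bdd_measurable B (fun _ => k).
Proof. by split; [exact: measurable_cst|exists `|k|]. Qed.

Lemma eq_bdd_measurable {B f g} : bdd_measurable B f ->
  (forall x, B x -> f x = g x) -> bdd_measurable B g.
Proof.
move=> [mf [M fM]] fg; split.
  by apply: eq_measurable_fun mf => x; rewrite inE => /fg.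
by exists M => x Bx; rewrite -fg //; exact: fM.
Qed.

Lemma bdd_measurableD {B f g} : bdd_measurable B f -> bdd_measurable B g ->
  bdd_measurable B (fun x => f x + g x).
Proof.
move=> [mf [M fM]] [mg [N gN]]; split; first exact: measurable_realfun.measurable_funD.
exists (M + N) => x Bx; apply: le_trans (ler_normD _ _) _.
by apply: lerD; [exact: fM|exact: gN].
Qed.

Lemma bdd_measurableM {B f g} : bdd_measurable B f -> bdd_measurable B g ->
  bdd_measurable B (fun x => f x * g x).
Proof.
move=> [mf [M fM]] [mg [N gN]]; split; first exact: measurable_realfun.measurable_funM.
by exists (M * N) => x Bx; rewrite normrM ler_pM ?fM ?gN.
Qed.

Lemma bdd_measurableN {B f} : bdd_measurable B f -> bdd_measurable B (fun x => - f x).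
Proof.
move=> bf; apply: eq_bdd_measurable (bdd_measurableM (bdd_measurable_cst B (-1)) bf) _.
by move=> x _; rewrite mulN1r.
Qed.

Lemma bdd_measurable_sqr {B f} : bdd_measurable B f -> bdd_measurable B (fun x => f x ^+ 2).
Proof.
by move=> bf; apply: eq_bdd_measurable (bdd_measurableM bf bf) _ => x _; rewrite expr2.
Qed.

Lemma bdd_measurable_norm {B f} : bdd_measurable B f -> bdd_measurable B (fun x => `|f x|).
Proof.
move=> [mf [M fM]]; split; first exact: measurableT_comp mf.
by exists M => x Bx; rewrite normr_id; exact: fM.
Qed.

Lemma bdd_measurable_integrable (mu : {measure set T -> \bar R}) B f :
  measurable B -> (mu B < +oo)%E -> bdd_measurable B f -> mu.-integrable B (EFin \o f).
Proof.
move=> mB muB [mf [M fM]]; apply: measurable_bounded_integrable => //.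
exists M; split; first exact: num_real.
by move=> y My x Bx; exact: le_trans (fM x Bx) (ltW My).
Qed.

End BoundedMeasurable.

Lemma within_continuous_ballP {R : realType} {T : pseudoMetricType R}
    (A : set T) (f : T -> R) :
  {within A, continuous f} <->
  forall x, A x -> forall e : R, 0 < e ->
    exists2 d : R, 0 < d & forall y, A y -> ball x d y -> `|f x - f y| < e.
Proof.
split=> [/subspace_continuousP fA x Ax e e0|fA].
  have := fA x Ax (ball (f x) e) (nbhsx_ballx _ _ e0).
  rewrite /= nbhs_simpl /within /= => /nbhs_ballP[d d0 dP].
  by exists d => // y Ay xy; exact: dP.
apply/subspace_continuousP => x Ax P /nbhs_ballP[e e0 eP].
have [d d0 dP] := fA x Ax e e0.
rewrite /= nbhs_simpl /within /=; apply/nbhs_ballP; exists d => // y xy Ay.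
exact/eP/dP.
Qed.

Section Continuous3.
Context {R : realType}.
Implicit Types (B : set (R3 R)) (f : R3 R -> R).

Lemma within_continuous_measurable3 {B f} :
  measurable B -> {within B, continuous f} -> measurable_fun B f.
Proof.
move=> mB /within_continuous_ballP fB.
apply: (measurability _ (measurable_realfun.RGenOInfty.measurableE R)).
move=> _ [_ [a ->] <-].
pose V := \bigcup_(p in [set p : R3 R * R | 0 < p.2 /\
             forall z, B z -> ball p.1 p.2 z -> a < f z]) ball p.1 p.2.
have -> : B `&` f @^-1` `]a, +oo[ = B `&` V.
  apply/seteqP; split=> y [By]; last first.
    by move=> [[x r] /= [_ xr] xy]; split; rewrite //= in_itv /= andbT; exact: xr.
  rewrite /= in_itv /= andbT => ay; split => //.
  have [r r0 yr] := fB y By (f y - a) (ltac:(by rewrite subr_gt0)).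
  exists (y, r) => /=; last exact: ballxx.
  split=> // z Bz yz; have := yr z Bz yz.
  by rewrite ltr_norml => /andP[_]; lra.
apply: measurableI => //; apply: open3_measurable.
by apply: bigcup_open => p _; exact: ball_open.
Qed.

Lemma within_continuous_bdd_measurable3 {B f} :
  measurable B -> compact B -> {within B, continuous f} -> bdd_measurable B f.
Proof.
move=> mB cB fB; split; first exact: within_continuous_measurable3.
have [M [_ HM]] := compact_bounded (continuous_compact fB cB).
exists (`|M| + 1) => x Bx; apply: (HM (`|M| + 1)); last by exists x.
by rewrite (le_lt_trans (ler_norm M)) // ltrDl.
Qed.

Lemma tube_slice_continuous (Tm Tp : R) (rh : R -> R3 R) (r : R)
    (F : R -> R3 R -> R) t :
  {within tube Tm Tp rh r, continuous (fun p => F p.1 p.2)} -> Tm <= t <= Tp ->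
  {within cball3 (rh t) r, continuous (F t)}.
Proof.
move=> /within_continuous_ballP FT ht; apply/within_continuous_ballP => x Bx e e0.
have [d d0 dF] := FT (t, x) (conj ht Bx) e e0.
by exists d => // y By xy; apply: (dF (t, y)) => //; split; [exact: ballxx|].
Qed.

End Continuous3.

Section Nonlinearity.
Context {d : measure_display} {T : measurableType d} {R : realType}.
Context {G1 dG1 : R -> R} (hG : G1_hyp G1 dG1).

Lemma G1_measurable : measurable_fun (`[0, +oo[ : set R) G1.
Proof.
have [_ [G1' _]] := hG.
have -> : `[0, +oo[ = [set 0] `|` `]0, +oo[ :> set R.
  apply/seteqP; split => s; rewrite /= !in_itv /= !andbT.
    by rewrite le_eqVlt => /orP[/eqP <-|->]; [left|right].
  by move=> [->//|/ltW].
apply/measurable_funU => //; split; first exact: measurable_fun_set1.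
apply: measurable_realfun.subspace_continuous_measurable_fun => //.
apply: derivable_within_continuous => s; rewrite in_itv /= andbT => s0.
by have [] := G1' s s0.
Qed.

(* The bound comes from |G1(|z|^2)| <= C |z|^(1+al) in G1_hyp, taken with al = 1/2
   at z = sqrt (k * N x). *)
Lemma bdd_measurable_G1 (B : set T) (N : T -> R) (k : R) :
  bdd_measurable B N -> (forall x, B x -> 0 <= N x) -> 0 <= k ->
  bdd_measurable B (fun x => G1 (k * N x)).
Proof.
move=> [mN [M NM]] N0 k0; split.
  apply: (measurable_comp (F := `[0, +oo[ : set R)) => //; last first.
  - by apply: measurable_realfun.measurable_funM => //; exact: measurable_cst.
  - exact: G1_measurable.
  - by move=> _ [x Bx <-]; rewrite /= in_itv /= andbT mulr_ge0 ?N0.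
have [_ [_ [_ G1_growth]]] := hG.
have [_ [_ hb]] := G1_growth (1 / 2) ltac:(apply/andP; split; lra).
set rho := Num.sqrt (k * M) + 1.
have rho0 : 0 < rho by rewrite ltr_wpDl ?sqrtr_ge0.
have [C hC] := hb _ rho0.
exists (`|C| * powR rho (1 + 1 / 2)) => x Bx.
have s0 : 0 <= k * N x by rewrite mulr_ge0 ?N0.
have sM : k * N x <= k * M by rewrite ler_wpM2l // (le_trans (ler_norm _) (NM x Bx)).
pose z : R[i] := (Num.sqrt (k * N x))%:C%C.
have z2 : cnorm2 z = k * N x by rewrite /cnorm2 /= expr0n /= addr0 sqr_sqrtr.
have zrho : cabs z <= rho.
  by rewrite /cabs z2 (le_trans (ler_wsqrtr sM)) // lerDl.
have [+ _] := hC z zrho; rewrite z2 => /le_trans; apply.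
apply: le_trans (ler_wpM2r (powR_ge0 _ _) (ler_norm C)) _.
by rewrite ler_wpM2l // ge0_ler_powR // ?nnegrE ?sqrtr_ge0 //; lra.
Qed.

End Nonlinearity.

Section ComplexNorm.
Context {R : realType}.
Implicit Types z w : R[i].
Local Open Scope complex_scope.

Lemma cnorm2_ge0 z : 0 <= cnorm2 z.
Proof. by rewrite /cnorm2 addr_ge0 // sqr_ge0. Qed.

Lemma cnorm2D_le z w : cnorm2 (z + w) <= 2 * cnorm2 z + 2 * cnorm2 w.
Proof.
case: z w => [a b] [c d]; rewrite /cnorm2 /= -subr_ge0.
by rewrite (_ : _ - _ = (a - c) ^+ 2 + (b - d) ^+ 2) ?addr_ge0 ?sqr_ge0 //; ring.
Qed.

Lemma cnorm2_iM (s : R) z : cnorm2 ('i * s%:C * z) = s ^+ 2 * cnorm2 z.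
Proof. by case: z => a b; rewrite /cnorm2 /=; ring. Qed.

End ComplexNorm.

(* Pointwise form of edens <= energy_coef * conc_dens, with Np = |d_t psi|^2,
   Ncov = |d~_t psi|^2, Ng = |grad psi|^2, N0 = |psi|^2, Gv = G_a(|psi|^2) and
   s = q phi / chi. *)
Lemma energy_density_le {R : realType} (c m chi s Np Ncov Ng N0 Gv : R) :
  0 < c -> 0 < m -> 0 < chi -> 0 <= Np -> 0 <= Ncov -> 0 <= Ng -> 0 <= N0 ->
  Ncov <= 2 * Np + 2 * s ^+ 2 * N0 ->
  `|chi ^+ 2 / (2 * m) * (c ^-2 * Ncov + Ng + Gv + (m * c / chi) ^+ 2 * N0)|
  <= (m * c ^+ 2 + (chi * s) ^+ 2 / (m * c ^+ 2)) *
     ((chi / (m * c)) ^+ 2 * (c ^-2 * Np + Ng) + (chi / (m * c)) ^+ 2 * `|Gv| + N0).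
Proof.
move=> c0 m0 chi0 Np0 Ncov0 Ng0 N00 hcov.
set w := chi ^+ 2 / (2 * m); set A := chi / (m * c).
set beta := (chi * s) ^+ 2 / (m * c ^+ 2).
have w0 : 0 < w by rewrite divr_gt0 ?exprn_gt0 ?mulr_gt0.
have ic0 : 0 < c ^-2 by rewrite invr_gt0 exprn_gt0.
have beta0 : 0 <= beta by rewrite divr_ge0 ?sqr_ge0 // mulr_ge0 ?sqr_ge0 // ltW.
have A0 : 0 <= A ^+ 2 := sqr_ge0 A.
apply: (@le_trans _ _ (w * (c ^-2 * (2 * Np + 2 * s ^+ 2 * N0) + Ng + `|Gv|
    + (m * c / chi) ^+ 2 * N0))).
  have tri (X Y Z : R) : 0 <= X -> 0 <= Z -> `|X + Y + Z| <= X + `|Y| + Z.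
    move=> X0 Z0; apply: le_trans (ler_normD _ _) _; rewrite (ger0_norm Z0) lerD2r.
    by apply: le_trans (ler_normD _ _) _; rewrite ger0_norm.
  rewrite normrM gtr0_norm // ler_pM2l //.
  have X0 : 0 <= c ^-2 * Ncov + Ng by rewrite addr_ge0 // mulr_ge0 // ltW.
  have Z0 : 0 <= (m * c / chi) ^+ 2 * N0 by rewrite mulr_ge0 // sqr_ge0.
  by apply: le_trans (tri _ _ _ X0 Z0) _; rewrite !lerD2r ler_pM2l.
rewrite -subr_ge0.
have -> : (m * c ^+ 2 + beta) * (A ^+ 2 * (c ^-2 * Np + Ng) + A ^+ 2 * `|Gv| + N0)
  - w * (c ^-2 * (2 * Np + 2 * s ^+ 2 * N0) + Ng + `|Gv| + (m * c / chi) ^+ 2 * N0)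
  = beta * A ^+ 2 * c ^-2 * Np + (w + beta * A ^+ 2) * (Ng + `|Gv|)
    + m * c ^+ 2 / 2 * N0.
  by rewrite /w /A /beta; field; rewrite !gt_eqF.
have mc0 : 0 <= m * c ^+ 2 / 2 by rewrite divr_ge0 // mulr_ge0 ?sqr_ge0 // ltW.
have bA0 : 0 <= beta * A ^+ 2 := mulr_ge0 beta0 A0.
apply: addr_ge0; [apply: addr_ge0|exact: mulr_ge0].
  by apply: mulr_ge0 => //; apply: mulr_ge0 => //; exact: ltW.
by apply: mulr_ge0; apply: addr_ge0 => //; exact: ltW.
Qed.

Section EnergyDensity.
Context {R : realType}.
Variables (c m q chi a : R) (G1 : R -> R).
Variables (phi : R -> R3 R -> R) (psi : R -> R3 R -> R[i]) (t : R).

Lemma cnorm2_covdt x :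
  cnorm2 (covdt q chi phi psi t x) =
  (pdf 0 (reF psi) t x - q * phi t x / chi * imF psi t x) ^+ 2 +
  (pdf 0 (imF psi) t x + q * phi t x / chi * reF psi t x) ^+ 2.
Proof. by rewrite /covdt /cnorm2 /cpd /reF /imF; case: (psi t x) => u v /=; ring. Qed.

Definition energy_coef (C : R) : R := m * c ^+ 2 + q ^+ 2 * C ^+ 2 / (m * c ^+ 2).

Lemma energy_coef_ge0 (C : R) : 0 < c -> 0 < m -> 0 <= energy_coef C.
Proof.
move=> c0 m0; have mc0 : 0 < m * c ^+ 2 by rewrite mulr_gt0 ?exprn_gt0.
apply: addr_ge0; first exact: ltW.
by apply: divr_ge0; [rewrite mulr_ge0 ?sqr_ge0|exact: ltW].
Qed.

Lemma edens_le_conc_dens (C : R) x :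
  0 < c -> 0 < m -> 0 < chi -> `|phi t x| <= C ->
  `|edens c m q G1 chi a phi psi t x| <= energy_coef C * conc_dens c m G1 chi a psi t x.
Proof.
move=> c0 m0 chi0 phiC; set s := q * phi t x / chi.
have grad0 : 0 <= grad_sq psi t x.
  by apply: addr_ge0; [apply: addr_ge0|]; exact: cnorm2_ge0.
have conc0 : 0 <= conc_dens c m G1 chi a psi t x.
  apply: addr_ge0 (cnorm2_ge0 _); apply: addr_ge0; apply: mulr_ge0 => //.
  - exact: sqr_ge0.
  - by rewrite addr_ge0 // mulr_ge0 ?cnorm2_ge0 // invr_ge0 exprn_ge0 // ltW.
  - exact: sqr_ge0.
apply: le_trans (energy_density_le _ _ _ s (cnorm2 (cpd 0 psi t x)) _ _ _ _ c0 m0 chi0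
  (cnorm2_ge0 _) (cnorm2_ge0 _) grad0 (cnorm2_ge0 _) _) _.
- by apply: le_trans (cnorm2D_le _ _) _; rewrite cnorm2_iM mulrA.
apply: (ler_wpM2r conc0).
rewrite lerD2l ler_pM2r ?invr_gt0 ?mulr_gt0 ?exprn_gt0 //.
have -> : chi * s = q * phi t x by rewrite /s mulrC divfK ?gt_eqF.
rewrite exprMn ler_wpM2l ?sqr_ge0 //.
have := real_normK (num_real (phi t x)); have := normr_ge0 (phi t x); nra.
Qed.

Lemma energy_densities_bdd_measurable (dG1 : R -> R) (B : set (R3 R)) :
  G1_hyp G1 dG1 -> 0 < a ->
  bdd_measurable B (reF psi t) -> bdd_measurable B (imF psi t) ->
  (forall k, (k < 4)%N ->
     bdd_measurable B (pdf k (reF psi) t) /\ bdd_measurable B (pdf k (imF psi) t)) ->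
  bdd_measurable B (phi t) ->
  bdd_measurable B (edens c m q G1 chi a phi psi t) /\
  bdd_measurable B (conc_dens c m G1 chi a psi t).
Proof.
move=> hG a0 hr hi hk hp.
have hN : bdd_measurable B (fun x => cnorm2 (psi t x)).
  exact: bdd_measurableD (bdd_measurable_sqr hr) (bdd_measurable_sqr hi).
have hcpd k : (k < 4)%N -> bdd_measurable B (fun x => cnorm2 (cpd k psi t x)).
  by move=> /hk[h1 h2]; exact: bdd_measurableD (bdd_measurable_sqr h1) (bdd_measurable_sqr h2).
have hGa : bdd_measurable B (fun x => Ga G1 a (cnorm2 (psi t x))).
  apply: bdd_measurableM (bdd_measurable_cst B (a ^-5)) _.
  apply: (bdd_measurable_G1 hG _ _ _ hN) => [x _|]; first exact: cnorm2_ge0.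
  by rewrite exprn_ge0 // ltW.
have hgrad : bdd_measurable B (grad_sq psi t).
  exact: bdd_measurableD (bdd_measurableD (hcpd 1%N isT) (hcpd 2%N isT)) (hcpd 3%N isT).
have [h0r h0i] := hk 0%N isT.
have hs := bdd_measurableM (bdd_measurableM (bdd_measurable_cst B q) hp)
  (bdd_measurable_cst B chi^-1).
have hcov : bdd_measurable B (fun x => cnorm2 (covdt q chi phi psi t x)).
  apply: eq_bdd_measurable (bdd_measurableD
    (bdd_measurable_sqr (bdd_measurableD h0r (bdd_measurableN (bdd_measurableM hs hi))))
    (bdd_measurable_sqr (bdd_measurableD h0i (bdd_measurableM hs hr)))) _.
  by move=> x _; rewrite cnorm2_covdt.
split.
  exact: bdd_measurableM (bdd_measurable_cst B _) (bdd_measurableD (bdd_measurableD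
    (bdd_measurableD (bdd_measurableM (bdd_measurable_cst B _) hcov) hgrad) hGa)
    (bdd_measurableM (bdd_measurable_cst B _) hN)).
exact: bdd_measurableD (bdd_measurableD (bdd_measurableM (bdd_measurable_cst B _)
  (bdd_measurableD (bdd_measurableM (bdd_measurable_cst B _) (hcpd 0%N isT)) hgrad))
  (bdd_measurableM (bdd_measurable_cst B _) (bdd_measurable_norm hGa))) hN.
Qed.

End EnergyDensity.

Section WeightedMean.
Context {d : measure_display} {T : measurableType d} {R : realType}.
Context {mu : {measure set T -> \bar R}} {B : set T} {e g p : T -> R}.
Hypotheses (mB : measurable B) (muB : (mu B < +oo)%E).
Hypotheses (be : bdd_measurable B e) (bg : bdd_measurable B g) (bp : bdd_measurable B p).

(* The weight e may change sign, so the deviation is controlled through the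
   dominating density K g rather than through e itself. *)
Lemma weighted_mean_dist_le (p0 rad K C c0 : R) :
  (forall x, B x -> `|e x| <= K * g x) -> (forall x, B x -> `|p x - p0| <= rad) ->
  0 <= K -> 0 <= rad -> 0 <= C -> Rintegral mu B g <= C ->
  0 < c0 -> c0 <= Rintegral mu B e ->
  `|(Rintegral mu B e)^-1 * Rintegral mu B (fun x => p x * e x) - p0|
    <= rad * (K * C) / c0.
Proof.
move=> eKg prad K0 rad0 C0 gC c00 c0E.
set E := Rintegral mu B e; have E0 : 0 < E := lt_le_trans c00 c0E.
have int f : bdd_measurable B f -> mu.-integrable B (EFin \o f).
  exact: bdd_measurable_integrable.
have bpe := bdd_measurableM (bdd_measurableD bp (bdd_measurable_cst B (- p0))) be.
have -> : E^-1 * Rintegral mu B (fun x => p x * e x) - p0 =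
    E^-1 * Rintegral mu B (fun x => (p x - p0) * e x).
  have ipe := int _ (bdd_measurableM bp be).
  have ie := int _ be.
  have ip0e := int _ (bdd_measurableM (bdd_measurable_cst B p0) be).
  under [X in _ = _ * X]eq_Rintegral do rewrite mulrBl.
  by rewrite RintegralB // RintegralZl // -/E; field; rewrite gt_eqF.
have dev : `|Rintegral mu B (fun x => (p x - p0) * e x)| <= rad * (K * C).
  apply: le_trans (le_normr_Rintegral mB (int _ bpe)) _.
  have bKg := bdd_measurableM (bdd_measurable_cst B (rad * K)) bg.
  apply: le_trans (le_Rintegral mB (int _ (bdd_measurable_norm bpe)) (int _ bKg) _) _.
    by move=> x Bx; rewrite normrM -mulrA ler_pM ?prad ?eKg.
  by rewrite RintegralZl ?(int _ bg) // -mulrA ler_wpM2l // ler_wpM2l.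
rewrite normrM gtr0_norm ?invr_gt0 // mulrC.
apply: le_trans (ler_wpM2r _ dev) _; first by rewrite invr_ge0 ltW.
by rewrite ler_wpM2l ?mulr_ge0 // lef_pV2 ?posrE.
Qed.

End WeightedMean.

Lemma ergocenter_dist_le {R : realType} {c m q : R} {G1 dG1 : R -> R} {Tm Tp : R}
    {rh : R -> R3 R} {chi a r : R} {phi : R -> R3 R -> R} {psi : R -> R3 R -> R[i]}
    {Cphi Cint c0 t : R} :
  0 < c -> 0 < m -> G1_hyp G1 dG1 -> 0 < a -> 0 < chi -> 0 <= r ->
  C2_on (tube Tm Tp rh r) phi -> cC2_on (tube Tm Tp rh r) psi -> Tm <= t <= Tp ->
  (forall x, cball3 (rh t) r x -> `|phi t x| <= Cphi) ->
  0 <= Cint -> vint3 (cball3 (rh t) r) (conc_dens c m G1 chi a psi t) <= Cint ->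
  0 < c0 -> c0 <= Ebar c m q G1 chi a phi psi rh r t ->
  norm3 (sub3 (ergocenter c m q G1 chi a phi psi rh r t) (rh t))
    <= r * (3 * (energy_coef c m q Cphi * Cint) / c0).
Proof.
move=> c0_gt0 m0 hG a0 chi0 r0 [[cphi _] _] [[[cre hre] _] [[cim him] _]] ht phiC
  Cint0 hint c00 hE.
set B := cball3 (rh t) r.
have mB : measurable B := cball3_measurable _ _.
have slice (F : R -> R3 R -> R) : {within tube Tm Tp rh r, continuous (fun p => F p.1 p.2)} ->
    bdd_measurable B (F t).
  move=> /tube_slice_continuous/(_ ht).
  exact: within_continuous_bdd_measurable3 mB (cball3_compact _ _).
have [be bg] := energy_densities_bdd_measurable c m q chi a G1 phi psi t _ B hG a0
  (slice _ cre) (slice _ cim)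
  (fun k hk => conj (slice _ (hre k hk).2) (slice _ (him k hk).2)) (slice _ cphi).
set K := energy_coef c m q Cphi.
have mean (p : R3 R -> R) : continuous p ->
    (forall x, B x -> `|p x - p (rh t)| <= r) ->
    `|(Ebar c m q G1 chi a phi psi rh r t)^-1 *
      vint3 B (fun x => p x * edens c m q G1 chi a phi psi t x) - p (rh t)|
    <= r * (K * Cint) / c0.
  move=> cp pr.
  have bp := within_continuous_bdd_measurable3 mB (cball3_compact _ _)
    (continuous_subspaceT cp).
  apply: (weighted_mean_dist_le (mu := @leb3 R) mB (cball3_lty _ _) be bg bp _ _ K _ _ _ pr)
    => //.
  - by move=> x Bx; apply: edens_le_conc_dens => //; exact: phiC.
  - exact: energy_coef_ge0.
have coord x : B x -> [/\ `|x1 x - x1 (rh t)| <= r, `|x2 x - x2 (rh t)| <= r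
    & `|x3 x - x3 (rh t)| <= r].
  by move=> Bx; have [] := coord_le_norm3 (sub3 x (rh t)); split; exact: le_trans Bx.
have -> : r * (3 * (K * Cint) / c0) = 3 * (r * (K * Cint) / c0) by ring.
apply: norm3_le.
- by apply: mean x1_continuous _ => x /coord[].
- by apply: mean x2_continuous _ => x /coord[].
- by apply: mean x3_continuous _ => x /coord[].
Qed.
Theorem lemma2 (R : realType) (c m q : R) (G1 dG1 : R -> R) (Tm Tp : R)
  (rh : R -> R3 R) (a chi Rn : nat -> R)
  (phi : nat -> R -> R3 R -> R) (psi : nat -> R -> R3 R -> R[i])
  (phi0 : R -> R) (gphi : R -> R3 R) (C : R) :
  0 < c -> 0 < m -> G1_hyp G1 dG1 ->
  vC2_on Tm Tp rh ->
  (forall t, Tm <= t <= Tp ->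
     norm3 (vder rh t) <= C /\ norm3 (vder (vder rh) t) <= C) ->
  (forall n, 0 < a n /\ 0 < chi n /\ 0 < Rn n) ->
  Rn @ \oo --> 0 -> a @ \oo --> 0 -> chi @ \oo --> 0 ->
  (forall n, (chi n / (m * c)) / a n <= C) ->
  (forall M : R, \forall n \near \oo, M <= Rn n / a n) ->
  (forall n, C2_on (tube Tm Tp rh (Rn n)) (phi n)) ->
  (forall n t x, tube Tm Tp rh (Rn n) (t, x) ->
     `|phi n t x| + grad0_norm c (phi n) t x <= C) ->
  (forall t, Tm <= t <= Tp -> derivable phi0 t 1 /\ vderivable gphi t) ->
  (forall t, Tm <= t <= Tp ->
     `|phi0 t| <= C /\ norm3 (gphi t) <= C /\ norm3 (vder gphi t) <= C) ->
  (forall e : R, 0 < e -> \forall n \near \oo, forall t x,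
     tube Tm Tp rh (Rn n) (t, x) ->
     `|phi n t x - phi_inf rh phi0 gphi t x|
     + grad0_norm c (fun s y => phi n s y - phi_inf rh phi0 gphi s y) t x <= e) ->
  (forall n, cC2_on (tube Tm Tp rh (Rn n)) (psi n)) ->
  (forall n t x, tube Tm Tp rh (Rn n) (t, x) ->
     KG_op c m q dG1 (chi n) (a n) (phi n) (psi n) t x = 0) ->
  (* (i) *)
  (forall n t, Tm <= t <= Tp ->
     vint3 (cball3 (rh t) (Rn n)) (conc_dens c m G1 (chi n) (a n) (psi n) t) <= C) ->
  (* (ii) *)
  (forall e : R, 0 < e -> \forall n \near \oo, forall t, Tm <= t <= Tp ->
     sint3 (rh t) (Rn n) (conc_dens c m G1 (chi n) (a n) (psi n) t) <= e) ->
  (* (iii) *)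
  (exists c0 : R, 0 < c0 /\ exists n0 : nat, forall n, (n0 <= n)%N ->
     forall t, Tm <= t <= Tp ->
       c0 <= Ebar c m q G1 (chi n) (a n) (phi n) (psi n) rh (Rn n) t) ->
  (* (iv) *)
  (exists t0 : R, Tm <= t0 <= Tp /\
     cvg ((fun n => Ebar c m q G1 (chi n) (a n) (phi n) (psi n) rh (Rn n) t0) @ \oo)) ->
  forall e : R, 0 < e -> \forall n \near \oo, forall t, Tm <= t <= Tp ->
    norm3 (sub3 (ergocenter c m q G1 (chi n) (a n) (phi n) (psi n) rh (Rn n) t) (rh t))
      <= e.
Proof.
move=> c_gt0 m_gt0 hG _ _ hpos Rn0 _ _ _ _ phiC2 phiC _ _ _ psiC2 _ conc_int _
  [cE [cE_gt0 [n0 Elow]]] _ e e_gt0.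
set L := 3 * (energy_coef c m q C * `|C|) / cE.
have L0 : 0 <= L.
  apply: divr_ge0 (ltW cE_gt0); apply: mulr_ge0 => //.
  exact: mulr_ge0 (energy_coef_ge0 _ _ _ _ c_gt0 m_gt0) (normr_ge0 C).
have L1 : 0 < L + 1 by lra.
have Rn_small := (@cvgrPdist_le _ _ _ _ _ Rn 0).1 Rn0 (e / (L + 1)) (divr_gt0 e_gt0 L1).
near=> n => t ht.
have [a_gt0 [chi_gt0 Rn_gt0]] := hpos n.
have phiB x : cball3 (rh t) (Rn n) x -> `|phi n t x| <= C.
  move=> Bx; have := phiC n t x (conj ht Bx).
  have : 0 <= grad0_norm c (phi n) t x := sqrtr_ge0 _; lra.
apply: le_trans (ergocenter_dist_le c_gt0 m_gt0 hG a_gt0 chi_gt0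
  (ltW Rn_gt0) (phiC2 n) (psiC2 n) ht phiB (normr_ge0 C)
  (le_trans (conc_int n t ht) (ler_norm C)) cE_gt0 _) _.
  by apply: Elow => //; near: n; exact: nbhs_infty_ge.
have : Rn n <= e / (L + 1).
  apply: le_trans (ler_norm _) _; rewrite -normrN -sub0r; near: n; exact: Rn_small.
rewrite ler_pdivlMr // mulrDr mulr1 -/L; have := ltW Rn_gt0.
have := mulr_ge0 (ltW Rn_gt0) L0; lra.
Unshelve. all: by end_near.
Qed.
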